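(* If $G$ is a connected graph of order at least $3$ that is not a path, then $\gamma_P(G)\le \frac{1}{2}F_c(G)$, and this bound is sharp (there exist such graphs attaining equality).
   Context: Forcing process: given a set of initially colored vertices, at each step a colored vertex with exactly one non-colored neighbor forces (colors) that neighbor. A set $S\subseteq V(G)$ is a forcing set if iterating this process from $S$ eventually colors all vertices; it is a connected forcing set if moreover the induced subgraph $G[S]$ is connected. $F_c(G)$ is the minimum cardinality of a connected forcing set of $G$. Power domination: for $S\subseteq V$ define $\mathcal{P}_G^0(S)=N[S]$ and $\mathcal{P}_G^{i+1}(S)=\bigcup\{N[v]: v\in \mathcal{P}_G^i(S),\ |N[v]\setminus \mathcal{P}_G^i(S)|\le 1\}$; these stabilize to $\mathcal{P}_G^\infty(S)$, and $S$ is power dominating if $\mathcal{P}_G^\infty(S)=V(G)$. $\gamma_P(G)$ is the minimum cardinality of a power dominating set. *)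

From mathcomp Require Import all_boot.
From mathcomp Require Import boolp.
Set Implicit Arguments. Unset Strict Implicit. Unset Printing Implicit Defensive.

Section Graphs.
Variable T : finType.
Variable e : rel T.

Definition simple_graph : Prop := symmetric e /\ irreflexive e.

Definition graph_connected : Prop := forall x y : T, connect e x y.

Definition is_path_graph : Prop :=
  exists s : seq T,
    [/\ uniq s, (forall x, x \in s) &
        forall x y, e x y <->
          exists i, i.+1 < size s /\
            ((nth x s i = x /\ nth x s i.+1 = y) \/
             (nth x s i = y /\ nth x s i.+1 = x))].

Definition force_step (B B' : {set T}) : bool :=
  [exists u, exists v,
    [&& u \in B, v \notin B, e u v,
        [forall w, (e u w && (w != v)) ==> (w \in B)] & B' == v |: B]].

Definition forcing_set (S : {set T}) : bool := connect force_step S setT.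

Definition induced_connected (S : {set T}) : bool :=
  [forall x in S, forall y in S,
     connect (fun a b => [&& a \in S, b \in S & e a b]) x y].

Definition connected_forcing_set (S : {set T}) : bool :=
  forcing_set S && induced_connected S.

Definition Fc : nat :=
  \big[minn/#|T|]_(S : {set T} | connected_forcing_set S) #|S|.

Definition cnbhd (v : T) : {set T} := v |: [set w | e v w].
Definition cnbhd_set (S : {set T}) : {set T} := \bigcup_(v in S) cnbhd v.

Definition pd_step (A : {set T}) : {set T} :=
  \bigcup_(v in A | #|cnbhd v :\: A| <= 1) cnbhd v.

Definition P_iter (S : {set T}) (i : nat) : {set T} := iter i pd_step (cnbhd_set S).

Definition power_dominating (S : {set T}) : Prop :=
  exists i, P_iter S i = setT.

Definition gammaP : nat :=
  \big[minn/#|T|]_(S : {set T} | `[< power_dominating S >]) #|S|.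

End Graphs.

From mathcomp Require Import all_boot.
From mathcomp Require Import boolp.
Set Implicit Arguments. Unset Strict Implicit. Unset Printing Implicit Defensive.

(* Let S be a connected forcing set.  Forcing from a single vertex only ever
   extends an induced path at its end, so |S| <= 1 would make G a path; hence
   |S| >= 2 and the connected graph G[S] has no isolated vertex.  By Ore's
   argument (the complement of a minimal dominating set of a graph without
   isolated vertices is again dominating), G[S] has a dominating set D with
   2|D| <= |S|.  Then S lies in N[D], and a forcing step from a subset of the
   observed set is also a power-domination step, so D is power dominating.
   The triangle attains equality: gamma_P(K3) = 1 and F_c(K3) = 2. *)

Lemma bigminn_le_cond (I : finType) (P : pred I) (F : I -> nat) x j :
  P j -> \big[minn/x]_(i | P i) F i <= F j.
Proof.
move=> Pj; have := mem_index_enum j; elim: (index_enum I) => //= i r IHr.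
rewrite inE big_cons => /predU1P [<- | jr]; first by rewrite Pj geq_minl.
case: (P i); last exact: IHr.
exact: leq_trans (geq_minr _ _) (IHr jr).
Qed.

Lemma bigminn_geq (I : finType) (P : pred I) (F : I -> nat) x m :
  m <= x -> (forall i, P i -> m <= F i) -> m <= \big[minn/x]_(i | P i) F i.
Proof. by move=> mx mF; elim/big_ind: _ => // a b ma mb; rewrite leq_min ma mb. Qed.

Section PowerDomination.
Variables (T : finType) (e : rel T).

Lemma mem_cnbhd_self v : v \in cnbhd e v.
Proof. by rewrite setU11. Qed.

Definition union_of_cnbhds (A : {set T}) : Prop :=
  forall x, x \in A -> exists2 w, x \in cnbhd e w & cnbhd e w \subset A.

Lemma union_of_cnbhds_bigcup (P : pred T) :
  union_of_cnbhds (\bigcup_(v | P v) cnbhd e v).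
Proof. by move=> x /bigcupP [w Pw xw]; exists w => //; apply: bigcup_sup. Qed.

Lemma pd_step_ext (A : {set T}) : union_of_cnbhds A -> A \subset pd_step e A.
Proof.
move=> unA; apply/subsetP => x /unA [w xw wA]; apply/bigcupP; exists w => //.
rewrite (subsetP wA _ (mem_cnbhd_self w)) /=.
by move: wA; rewrite -setD_eq0 => /eqP ->; rewrite cards0.
Qed.

Lemma force_step_pd_step (A B B' : {set T}) :
  union_of_cnbhds A -> B \subset A -> force_step e B B' -> B' \subset pd_step e A.
Proof.
move=> unA sBA /existsP [u /existsP [v /and5P [uB vB euv /forallP sat /eqP ->]]].
have uA := subsetP sBA u uB.
have unsat_u : cnbhd e u :\: A \subset [set v].
  apply/subsetP => z; rewrite !inE => /andP [zA /predU1P [zu | euz]].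
    by rewrite zu uA in zA.
  apply/negPn/negP => zv; move: (sat z); rewrite euz zv /= => zB.
  by rewrite (subsetP sBA _ zB) in zA.
have Nu_sub : cnbhd e u \subset pd_step e A.
  by apply: bigcup_sup; rewrite uA -(cards1 v) (subset_leq_card unsat_u).
apply/subsetP => y /setU1P [-> | yB].
  by apply: (subsetP Nu_sub); rewrite !inE euv orbT.
exact: subsetP (pd_step_ext unA) y (subsetP sBA y yB).
Qed.

Lemma forcing_path_pd_iter (p : seq {set T}) (A B : {set T}) :
  union_of_cnbhds A -> B \subset A -> path (force_step e) B p ->
  last B p = setT -> iter (size p) (pd_step e) A = setT.
Proof.
elim: p A B => [|B' p IHp] A B unA sBA /=.
  by move=> _ BT; apply/eqP; rewrite eqEsubset subsetT -BT.
case/andP => stepB pathB' lastT; rewrite -iterS iterSr.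
apply: IHp pathB' lastT; first exact: union_of_cnbhds_bigcup.
exact: force_step_pd_step stepB.
Qed.

Lemma forcing_set_power_dominating (S D : {set T}) :
  forcing_set e S -> S \subset cnbhd_set e D -> power_dominating e D.
Proof.
case/connectP => p pathS lastT sSD; exists (size p); rewrite /P_iter.
apply: forcing_path_pd_iter sSD pathS (esym lastT).
exact: union_of_cnbhds_bigcup.
Qed.

Lemma power_dominating_set0 : power_dominating e set0 -> #|T| = 0.
Proof.
case=> i; have -> : P_iter e set0 i = set0.
  elim: i => [|i IHi]; first exact: big_set0.
  by rewrite /P_iter iterS -/(P_iter e set0 i) IHi; apply: big_pred0 => v; rewrite inE.
by rewrite -cardsT => <-; rewrite cards0.
Qed.

Lemma gammaP_gt0 : 0 < #|T| -> 0 < gammaP e.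
Proof.
move=> T_gt0; apply: bigminn_geq => // S /asboolP pdS.
rewrite card_gt0; apply: contraTneq T_gt0 => S0.
by rewrite S0 in pdS; rewrite (power_dominating_set0 pdS).
Qed.

End PowerDomination.

Section SingleVertexForcing.
Variables (T : finType) (e : rel T).
Hypotheses (e_sym : symmetric e) (e_irr : irreflexive e).

(* Invariant of forcing from at most one vertex: the coloured set B is an
   induced path listed by s, and every vertex of s but the last already has
   all its neighbours coloured. *)
Definition forced_path (B : {set T}) (s : seq T) : Prop :=
  [/\ uniq s, B =i s,
      {in s &, forall x y,
         e x y = (index y s == (index x s).+1) || (index x s == (index y s).+1)}
    & forall x w, x \in s -> (index x s).+1 < size s -> e x w -> w \in s].

Lemma forced_path_small (S : {set T}) : #|S| <= 1 -> forced_path S (enum S).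
Proof.
move=> S_le1; split=> [||x y|x w _].
- exact: enum_uniq.
- by move=> x; rewrite mem_enum.
- rewrite !mem_enum => xS yS; rewrite (card_le1_eqP S_le1 x y xS yS).
  by rewrite e_irr (ltn_eqF (ltnSn _)).
- by rewrite -cardE => /leq_trans/(_ S_le1).
Qed.

Lemma forced_path_rcons B s u v :
  forced_path B s -> u \in B -> v \notin B -> e u v ->
  (forall w, e u w -> w != v -> w \in B) -> forced_path (v |: B) (rcons s v).
Proof.
case=> s_uniq Bs s_adj s_sat uB vB euv u_sat.
move: uB vB; rewrite !Bs => uB vB.
have u_last : (index u s).+1 = size s.
  apply/eqP; rewrite eqn_leq index_mem uB /= leqNgt; apply/negP => u_inner.
  by rewrite (s_sat u v uB u_inner euv) in vB.
have last_eq y : y \in s -> (index y s).+1 = size s -> y = u.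
  by move=> yS y_last; apply: (index_inj u yS uB); apply: succn_inj; rewrite y_last.
have idx x : x \in s -> index x (rcons s v) = index x s.
  by move=> xS; rewrite -cats1 index_cat xS.
have idv : index v (rcons s v) = size s.
  by rewrite -cats1 index_cat (negbTE vB) /= eqxx addn0.
have ev y : y \in s -> e v y = ((index y s).+1 == size s).
  move=> yS; have [y_last | y_inner] := eqVneq (index y s).+1 (size s).
    by rewrite (last_eq y yS y_last) e_sym.
  apply/negbTE/negP => evy; move/negP: vB; apply; apply: (s_sat y v yS).
    by rewrite ltn_neqAle y_inner index_mem.
  by rewrite e_sym.
have idx_lt x : x \in s -> (index x s == (size s).+1) = false.
  by move=> xS; rewrite ltn_eqF // ltnW // ltnS index_mem.
split.
- by rewrite rcons_uniq vB s_uniq.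
- by move=> x; rewrite in_setU1 mem_rcons inE Bs.
- move=> x y; rewrite !mem_rcons !inE.
  case/predU1P => [-> | xS]; case/predU1P => [-> | yS].
  + by rewrite e_irr idv (ltn_eqF (ltnSn _)).
  + by rewrite idv idx // ev // idx_lt // orbF eq_sym.
  + by rewrite idv idx // e_sym ev // idx_lt // orbF eq_sym.
  + by rewrite !idx // s_adj.
- move=> x w; rewrite mem_rcons inE size_rcons => /predU1P [-> | xS].
    by rewrite idv ltnn.
  rewrite idx // ltnS leq_eqVlt => /predU1P [x_last | x_inner] exw.
    rewrite mem_rcons inE -Bs; apply/predU1P; have [-> | wv] := eqVneq w v.
      by left.
    by right; apply: u_sat wv; rewrite -(last_eq x xS x_last).
  by rewrite mem_rcons inE (s_sat x w xS x_inner exw) orbT.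
Qed.

Lemma forced_path_connect B B' s :
  forced_path B s -> connect (force_step e) B B' -> exists s', forced_path B' s'.
Proof.
move=> fpB /connectP [p]; elim: p B s fpB => [|B1 p IHp] B s fpB /=.
  by move=> _ ->; exists s.
case/andP => /existsP [u /existsP [v /and5P [uB vB euv /forallP u_sat /eqP ->]]].
apply: IHp; apply: forced_path_rcons fpB uB vB euv _ => w euw wv.
by move: (u_sat w); rewrite euw wv.
Qed.

Lemma forced_path_setT s : forced_path setT s -> is_path_graph e.
Proof.
case=> s_uniq Ts s_adj _; have sT x : x \in s by rewrite -Ts inE.
exists s; split => // x y; rewrite s_adj //; split.
  case/orP => /eqP idx_eq.
    exists (index x s); rewrite -idx_eq index_mem sT !nth_index //.
    by split => //; left.
  exists (index y s); rewrite -idx_eq index_mem sT !nth_index //.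
  by split => //; right.
case=> i [i_lt [[<- <-] | [<- <-]]]; rewrite !index_uniq ?eqxx ?orbT //.
all: exact: ltnW.
Qed.

Lemma forcing_set_small_path_graph (S : {set T}) :
  #|S| <= 1 -> forcing_set e S -> is_path_graph e.
Proof.
move=> S_le1 /(forced_path_connect (forced_path_small S_le1)) [s].
exact: forced_path_setT.
Qed.

End SingleVertexForcing.

Section Domination.
Variables (T : finType) (e : rel T).
Hypotheses (e_sym : symmetric e) (e_irr : irreflexive e).

Definition dominates (S D : {set T}) : bool :=
  (D \subset S) && [forall x in S, exists d in D, (d == x) || e d x].

Lemma dominates_sub_cnbhd_set (S D : {set T}) :
  dominates S D -> S \subset cnbhd_set e D.
Proof.
case/andP => _ /forall_inP domD; apply/subsetP => x /domD /exists_inP [d dD dx].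
by apply/bigcupP; exists d => //; rewrite !inE eq_sym.
Qed.

Variable S : {set T}.
Hypothesis S_adj : {in S, forall x, exists2 y, y \in S & e x y}.

Lemma minset_dominates_adj_compl (D : {set T}) d :
  minset (dominates S) D -> d \in D -> exists2 y, y \in S :\: D & e d y.
Proof.
case/minsetP=> /andP [sDS /forall_inP domD] minD dD.
have [/exists_inP [y yD dy] | no_nbr] := boolP [exists y in S :\: D, e d y].
  by exists y.
have nbr_in_D y : y \in S -> e d y -> y \in D.
  move=> yS dy; apply: contraR no_nbr => yD.
  by apply/exists_inP; exists y; rewrite // inE yD.
have neq_d y : e d y -> y != d by apply: contraTneq => ->; rewrite e_irr.
suff /minD/(_ (subsetDl D [set d]))/setP/(_ d) : dominates S (D :\ d).
  by rewrite !inE eqxx dD.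
rewrite /dominates (subset_trans (subsetDl _ _) sDS).
apply/forall_inP => x xS; have /exists_inP [d' d'D d'x] := domD x xS.
have [d'd | d'd] := eqVneq d' d; last first.
  by apply/exists_inP; exists d'; rewrite // !inE d'd.
move: d'x; rewrite {}d'd => /predU1P [dx | dx]; apply/exists_inP.
  rewrite -{}dx in xS *; have [y yS dy] := S_adj xS.
  by exists y; rewrite ?inE ?neq_d ?nbr_in_D // e_sym dy orbT.
by exists x; rewrite ?inE ?neq_d ?nbr_in_D ?eqxx.
Qed.

Lemma minset_dominates_compl (D : {set T}) :
  minset (dominates S) D -> dominates S (S :\: D).
Proof.
move=> minD; rewrite /dominates subsetDl; apply/forall_inP => x xS.
have [xD | xD] := boolP (x \in D).
  have [y yC xy] := minset_dominates_adj_compl minD xD.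
  by apply/exists_inP; exists y; rewrite // e_sym xy orbT.
by apply/exists_inP; exists x; rewrite ?inE ?xD ?xS ?eqxx.
Qed.

Lemma exists_half_dominating : exists2 D, dominates S D & 2 * #|D| <= #|S|.
Proof.
have [D minD] : {D | minset (dominates S) D}.
  apply: ex_minset; exists S; rewrite /dominates subxx.
  by apply/forall_inP => x xS; apply/exists_inP; exists x; rewrite ?eqxx.
have sDS : D \subset S by case/minsetP: minD => /andP [].
have card_split : #|D| + #|S :\: D| = #|S|.
  by rewrite -(cardsID D S) (setIidPr sDS).
have [DC | CD] := leqP #|D| #|S :\: D|.
  by exists D; [case/minsetP: minD | rewrite -card_split mul2n -addnn leq_add2l].
exists (S :\: D); first exact: minset_dominates_compl.
by rewrite -card_split mul2n -addnn leq_add2r ltnW.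
Qed.

End Domination.

Section ConnectedForcing.
Variables (T : finType) (e : rel T).
Hypotheses (e_sym : symmetric e) (e_irr : irreflexive e).

Lemma induced_connected_adj (S : {set T}) :
  induced_connected e S -> 2 <= #|S| -> {in S, forall x, exists2 y, y \in S & e x y}.
Proof.
move=> connS S_ge2 x xS; have /card_gt0P [y] : 0 < #|S :\ x|.
  by move: S_ge2; rewrite (cardsD1 x S) xS.
rewrite !inE => /andP [yx yS].
have /connectP [[|z p] /= pathxy yl] := forall_inP (forall_inP connS x xS) y yS.
  by rewrite yl eqxx in yx.
by case/andP: pathxy => /and3P [_ zS xz] _; exists z.
Qed.

Lemma connected_forcing_set_card (S : {set T}) :
  ~ is_path_graph e -> connected_forcing_set e S -> 2 <= #|S|.
Proof.
move=> not_path /andP [forcS _]; rewrite leqNgt; apply/negP => S_le1.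
exact: not_path (forcing_set_small_path_graph e_sym e_irr S_le1 forcS).
Qed.

Lemma twice_gammaP_le_card (S : {set T}) :
  ~ is_path_graph e -> connected_forcing_set e S -> 2 * gammaP e <= #|S|.
Proof.
move=> not_path cfS; have S_ge2 := connected_forcing_set_card not_path cfS.
case/andP: cfS => forcS connS.
have [D domD DS] := exists_half_dominating e_sym e_irr (induced_connected_adj connS S_ge2).
apply: leq_trans DS; rewrite leq_mul2l /=; apply: bigminn_le_cond; apply/asboolP.
exact: forcing_set_power_dominating forcS (dominates_sub_cnbhd_set domD).
Qed.

Lemma connected_forcing_setT : graph_connected e -> connected_forcing_set e setT.
Proof.
move=> connT; rewrite /connected_forcing_set /forcing_set connect0 /=.
apply/forall_inP => x _; apply/forall_inP => y _.
by rewrite (@eq_connect _ _ e) // => a b; rewrite !inE.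
Qed.

Lemma twice_gammaP_le_Fc :
  graph_connected e -> ~ is_path_graph e -> 2 * gammaP e <= Fc e.
Proof.
move=> connT not_path; apply: bigminn_geq => [|S]; last exact: twice_gammaP_le_card.
by rewrite -cardsT twice_gammaP_le_card ?connected_forcing_setT.
Qed.

End ConnectedForcing.

Definition K3 : rel 'I_3 := fun i j => i != j.

Lemma K3_simple : simple_graph K3.
Proof. by split=> [i j | i]; rewrite /K3 ?eqxx // eq_sym. Qed.

Lemma K3_connected : graph_connected K3.
Proof. by move=> i j; have [-> | ij] := eqVneq i j; [apply: connect0 | apply: connect1]. Qed.

Lemma K3_not_path : ~ is_path_graph K3.
Proof.
case=> s [s_uniq sT s_adj].
have size_s : size s = 3.
  by rewrite -(card_uniqP s_uniq) -[RHS](card_ord 3); apply: eq_card => x; rewrite sT.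
have nth_inj i j : i < 3 -> j < 3 -> nth ord0 s i = nth ord0 s j -> i = j.
  by move=> i3 j3 /eqP; rewrite nth_uniq ?size_s // => /eqP.
have ends_adj : K3 (nth ord0 s 0) (nth ord0 s 2) by rewrite /K3 nth_uniq ?size_s.
have [i [i_lt ends]] := (s_adj _ _).1 ends_adj.
rewrite size_s in i_lt; rewrite !(set_nth_default ord0) ?size_s ?(ltnW i_lt) // in ends.
case: ends => [[/nth_inj i0 /nth_inj i1] | [/nth_inj i2 _]].
  by have := i1 i_lt isT; rewrite (i0 (ltnW i_lt) isT).
by have i_eq := i2 (ltnW i_lt) isT; rewrite i_eq in i_lt.
Qed.

Lemma K3_connected_forcing_set : connected_forcing_set K3 [set ord0; ord_max].
Proof.
apply/andP; split.
  apply: connect1; apply/existsP; exists ord0; apply/existsP; exists (Ordinal (isT : 1 < 3)).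
  apply/and5P; split; rewrite ?inE ?eqxx //.
    by apply/forallP => -[[|[|[|n]]] w_lt]; rewrite ?inE.
  by apply/eqP/setP => -[[|[|[|n]]] w_lt]; rewrite !inE.
apply/forall_inP => x xS; apply/forall_inP => y yS.
by have [-> | xy] := eqVneq x y; [apply: connect0 | apply: connect1; rewrite xS yS].
Qed.

Lemma K3_Fc : Fc K3 = 2.
Proof.
have [K3_sym K3_irr] := K3_simple.
apply/eqP; rewrite eqn_leq; apply/andP; split.
  apply: (@leq_trans #|[set ord0; ord_max : 'I_3]|); last by rewrite cards2.
  exact: bigminn_le_cond K3_connected_forcing_set.
apply: bigminn_geq; first by rewrite card_ord.
by move=> S; apply: (connected_forcing_set_card K3_sym K3_irr K3_not_path).
Qed.

Lemma K3_gammaP : gammaP K3 = 1.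
Proof.
apply/eqP; rewrite eqn_leq gammaP_gt0 ?card_ord // andbT.
have pd0 : power_dominating K3 [set ord0].
  exists 0; apply/setP => x; rewrite inE /P_iter /cnbhd_set big_set1 !inE.
  by rewrite /K3 eq_sym orbN.
apply: (@leq_trans #|[set ord0 : 'I_3]|); last by rewrite cards1.
by apply: bigminn_le_cond; apply/asboolP.
Qed.

Theorem proposition2 :
  (forall (T : finType) (e : rel T),
      simple_graph e -> graph_connected e -> 3 <= #|T| -> ~ is_path_graph e ->
      2 * gammaP e <= Fc e)
  /\
  (exists (n : nat) (e : rel 'I_n),
      [/\ simple_graph e, graph_connected e, 3 <= #|'I_n|, ~ is_path_graph e &
          2 * gammaP e = Fc e]).
Proof.
split=> [T e [e_sym e_irr] connT _ not_path | ].
  exact: twice_gammaP_le_Fc e_sym e_irr connT not_path.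
exists 3, K3; split.
- exact: K3_simple.
- exact: K3_connected.
- by rewrite card_ord.
- exact: K3_not_path.
- by rewrite K3_gammaP K3_Fc.
Qed.
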